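(* Let $p(\boldsymbol{x},y)$ be a joint density on $\mathcal{X}\times\{+1,-1\}$ with class priors $\pi_+=p(y=+1)\in(0,1)$, $\pi_-=1-\pi_+$. Generate a labeled noisy example as follows: draw two labeled examples $(\boldsymbol{x},y),(\boldsymbol{x}',y')$ independently from $p(\boldsymbol{x},y)$ conditioned on $(y,y')\in\{(+1,+1),(+1,-1),(-1,-1)\}$; independently draw an observed label $\widetilde{y}$ uniformly from $\{+1,-1\}$; if $\widetilde{y}=+1$ output the instance $\boldsymbol{x}$ with true label $y$, and if $\widetilde{y}=-1$ output the instance $\boldsymbol{x}'$ with true label $y'$. Denote the true label of the output by $y$ and define the inverse noise rates $\phi_+=p(y=-1\mid\widetilde{y}=+1)$, $\phi_-=p(y=+1\mid\widetilde{y}=-1)$ and the noise rates $\rho_+=p(\widetilde{y}=-1\mid y=+1)$, $\rho_-=p(\widetilde{y}=+1\mid y=-1)$. Then $$\phi_+=\frac{\pi_-^2}{\pi_+^2+\pi_-^2+\pi_+\pi_-},\quad \rho_+=\frac{\pi_+}{1+\pi_+},\quad \phi_-=\frac{\pi_+^2}{\pi_+^2+\pi_-^2+\pi_+\pi_-},\quad \rho_-=\frac{\pi_-}{1+\pi_-}.$$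
   Context: This formalizes viewing pairwise comparison data $(\boldsymbol{x},\boldsymbol{x}')$ as noisy-label data: the first component of each pair is treated as an observed positive ($\widetilde{y}=+1$) and the second as an observed negative ($\widetilde{y}=-1$), with equally many observed positives and negatives, so $p(\widetilde{y}=+1)=p(\widetilde{y}=-1)=1/2$. *)

From HB Require Import structures.
From mathcomp Require Import all_boot all_order all_algebra.
From mathcomp Require Import all_classical all_reals all_analysis.
Set Implicit Arguments. Unset Strict Implicit. Unset Printing Implicit Defensive.
Import Order.TTheory GRing.Theory Num.Theory.
Local Open Scope classical_set_scope.
Local Open Scope ring_scope.

(* Labels: true = +1, false = -1. *)
Section PairwiseNoise.
Context {d : measure_display} {X : measurableType d} {R : realType}.
Variable P : probability (X * bool)%type R.

Definition prior_pos : R := fine (P [set z | z.2 = true]).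
Definition prior_neg : R := 1 - prior_pos.

Definition pair_measure := (P \x P)%E.

Definition allowed : set ((X * bool) * (X * bool)) :=
  [set w | (w.1.2, w.2.2) \in [:: (true, true); (true, false); (false, false)]].

Definition pair_cond (A : set ((X * bool) * (X * bool))) : \bar R :=
  (pair_measure (A `&` allowed) / pair_measure allowed)%E.

(* law of the output ((x_out, y_out), y_tilde): y_tilde uniform on {+1,-1}
   independent of the pair; output (x,y) if y_tilde = +1, (x',y') otherwise *)
Definition out_law (A : set ((X * bool) * bool)) : \bar R :=
  ((2^-1)%:E * pair_cond [set w | A (w.1, true)] +
   (2^-1)%:E * pair_cond [set w | A (w.2, false)])%E.

Definition out_cond (A B : set ((X * bool) * bool)) : R :=
  fine (out_law (A `&` B)) / fine (out_law B).

Definition ev_true_label (b : bool) : set ((X * bool) * bool) := [set o | o.1.2 = b].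
Definition ev_obs_label (b : bool) : set ((X * bool) * bool) := [set o | o.2 = b].

Definition phi_pos : R := out_cond (ev_true_label false) (ev_obs_label true).
Definition phi_neg : R := out_cond (ev_true_label true) (ev_obs_label false).
Definition rho_pos : R := out_cond (ev_obs_label false) (ev_true_label true).
Definition rho_neg : R := out_cond (ev_obs_label true) (ev_true_label false).

End PairwiseNoise.

From HB Require Import structures.
From mathcomp Require Import all_boot all_order all_algebra.
From mathcomp Require Import all_classical all_reals all_analysis.
From mathcomp Require Import ring lra.
Import Order.TTheory GRing.Theory Num.Theory.
Local Open Scope classical_set_scope.
Local Open Scope ring_scope.

(** Every event involved depends on labels only, so its probability is a polynomial in the
    priors: conditioned on being allowed, the label pairs (+,+), (+,-), (-,-) carry weights
    proportional to [pi_+^2], [pi_+ pi_-], [pi_-^2], and the observed label selects the first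
    or the second component of the pair.  Each rate is then a ratio of such weights, e.g.
    [rho_+ = pi_+^2 / (2 pi_+^2 + pi_+ pi_-) = pi_+ / (1 + pi_+)]. *)

Section LabelEvents.
Context {d : measure_display} {X : measurableType d} {R : realType}.
Variable P : probability (X * bool)%type R.

Definition label_prob (b : bool) : R := if b then prior_pos P else prior_neg P.

Lemma measurable_label_pred (B : set bool) : measurable [set z : X * bool | B z.2].
Proof.
have mTB : measurable (@setT X `*` B) by apply: measurableX.
by rewrite setTX in mTB.
Qed.

Lemma prob_label (b : bool) : P [set z | z.2 = b] = (label_prob b)%:E.
Proof.
have prob_true : P [set z | z.2 = true] = (prior_pos P)%:E.
  rewrite /prior_pos fineK //; apply: fin_num_measure.
  exact: (measurable_label_pred (eq^~ true)).
case: b => //; rewrite /label_prob /prior_neg EFinB -prob_true -probability_setC.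
  by congr (P _); apply/seteqP; split=> -[x []] //=; rewrite /setC /=.
exact: (measurable_label_pred (eq^~ true)).
Qed.

Lemma prob_label_pred (g : pred bool) :
  P [set z | g z.2] = (\sum_b (g b)%:R * label_prob b)%:E.
Proof.
have label_cell b : [set z : X * bool | g z.2] `&` [set z | z.2 = b] =
    if g b then [set z | z.2 = b] else set0.
  apply/seteqP; split=> -[x c] /=; first by case=> gc <-; rewrite gc.
  by case: ifP => // gb /= ->.
have prob_cell b : P ([set z | g z.2] `&` [set z | z.2 = b]) = ((g b)%:R * label_prob b)%:E.
  by rewrite label_cell; case: (g b); rewrite ?measure0 ?prob_label ?mul1r ?mul0r.
have -> : [set z : X * bool | g z.2] =
    ([set z | g z.2] `&` [set z | z.2 = true]) `|` ([set z | g z.2] `&` [set z | z.2 = false]).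
  by apply/seteqP; split=> -[x []] /=; tauto.
rewrite measureU //= ?prob_cell ?big_bool -?EFinD //.
- exact: (measurable_label_pred [set c | g c /\ c = true]).
- exact: (measurable_label_pred [set c | g c /\ c = false]).
- by apply/seteqP; split=> -[x c] //= [[_ ->] [_]].
Qed.

Definition label_pair_mass (f : bool -> bool -> bool) : R :=
  \sum_b \sum_c (f b c)%:R * (label_prob b * label_prob c).

Lemma pair_measure_label_pred (f : bool -> bool -> bool) :
  pair_measure P [set w | f w.1.2 w.2.2] = (label_pair_mass f)%:E.
Proof.
pose cell c : set ((X * bool) * (X * bool)) :=
  [set z : X * bool | f z.2 c] `*` [set z | z.2 = c].
have prob_cell c :
    pair_measure P (cell c) = (\sum_b (f b c)%:R * (label_prob b * label_prob c))%:E.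
  transitivity ((\sum_b (f b c)%:R * label_prob b)%:E * (label_prob c)%:E)%E.
    rewrite /pair_measure product_measure1E.
    - by congr (_ * _)%E; [exact: (prob_label_pred (f^~ c)) | exact: prob_label].
    - exact: (measurable_label_pred [set b | f b c]).
    - exact: (measurable_label_pred (eq^~ c)).
  by rewrite -EFinM mulr_suml; under eq_bigr do rewrite -mulrA.
have -> : [set w : (X * bool) * (X * bool) | f w.1.2 w.2.2] = cell true `|` cell false.
  by apply/seteqP; split=> -[[x b] [x' []]]; rewrite /cell /setX /=; intuition.
rewrite /pair_measure measureU //= -/(pair_measure P) ?prob_cell -?EFinD.
- by congr (_%:E); rewrite /label_pair_mass [RHS]exchange_big [RHS]big_bool.
- by apply: measurableX; [exact: (measurable_label_pred [set b | f b true]) |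
                          exact: (measurable_label_pred (eq^~ true))].
- by apply: measurableX; [exact: (measurable_label_pred [set b | f b false]) |
                          exact: (measurable_label_pred (eq^~ false))].
- by apply/seteqP; split=> -[[x b] [x' c]] //; rewrite /cell /setX /= => -[[_ ->] [_]].
Qed.

Lemma allowed_labels : allowed = [set w : (X * bool) * (X * bool) | w.2.2 ==> w.1.2].
Proof. by apply/seteqP; split=> -[[x []] [x' []]]; rewrite /allowed /= !inE. Qed.

(* The mass is [1 - pi_+ pi_-] since [pi_+ + pi_- = 1], so no assumption on the prior is needed. *)
Lemma allowed_label_mass_gt0 : 0 < label_pair_mass (fun b c => c ==> b).
Proof. by rewrite /label_pair_mass !big_bool /= /label_prob /prior_neg; nra. Qed.

Lemma pair_cond_label_pred (f : bool -> bool -> bool) :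
  pair_cond P [set w | f w.1.2 w.2.2] =
  (label_pair_mass (fun b c => f b c && (c ==> b)) /
   label_pair_mass (fun b c => c ==> b))%:E.
Proof.
rewrite /pair_cond.
have -> : [set w | f w.1.2 w.2.2] `&` allowed =
    [set w : (X * bool) * (X * bool) | f w.1.2 w.2.2 && (w.2.2 ==> w.1.2)].
  by rewrite allowed_labels; apply/seteqP; split=> w /= => [[-> ->] | /andP].
rewrite (pair_measure_label_pred (fun b c => f b c && (c ==> b))).
rewrite allowed_labels (pair_measure_label_pred (fun b c => c ==> b)).
by rewrite inver gt_eqF ?allowed_label_mass_gt0.
Qed.

Definition label_event (g : bool -> bool -> bool) : set ((X * bool) * bool) :=
  [set o | g o.1.2 o.2].

Lemma ev_true_labelE (b : bool) : ev_true_label b = label_event (fun y _ => y == b).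
Proof. by apply/seteqP; split=> o /eqP. Qed.

Lemma ev_obs_labelE (b : bool) : ev_obs_label b = label_event (fun _ yt => yt == b).
Proof. by apply/seteqP; split=> o /eqP. Qed.

Lemma setI_label_event (g h : bool -> bool -> bool) :
  label_event g `&` label_event h = label_event (fun y yt => g y yt && h y yt).
Proof.
by apply/seteqP; split=> o; rewrite /label_event /=; [case=> -> -> | case/andP].
Qed.

(* [2 D] times the output probability of [label_event g], [D] being the mass of the allowed
   label pairs: the output label is [b] when the observed label is +1, [c] when it is -1. *)
Definition label_event_mass (g : bool -> bool -> bool) : R :=
  label_pair_mass (fun b c => g b true && (c ==> b)) +
  label_pair_mass (fun b c => g c false && (c ==> b)).

Lemma out_law_label_event (g : bool -> bool -> bool) :
  out_law P (label_event g) =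
  (label_event_mass g / (2 * label_pair_mass (fun b c => c ==> b)))%:E.
Proof.
rewrite /out_law (pair_cond_label_pred (fun b _ => g b true)).
rewrite (pair_cond_label_pred (fun _ c => g c false)) -!EFinM -EFinD.
have := allowed_label_mass_gt0; rewrite /label_event_mass.
by move=> /gt_eqF /negbT mass_neq0; congr (_%:E); field.
Qed.

Lemma out_cond_label_event (g h : bool -> bool -> bool) :
  out_cond P (label_event g) (label_event h) =
  label_event_mass (fun y yt => g y yt && h y yt) / label_event_mass h.
Proof.
rewrite /out_cond setI_label_event !out_law_label_event /= invf_div mulrA divfK //.
by rewrite mulf_neq0 ?pnatr_eq0 // gt_eqF ?allowed_label_mass_gt0.
Qed.

End LabelEvents.

Theorem theorem5 (d : measure_display) (X : measurableType d) (R : realType)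
  (P : probability (X * bool)%type R)
  (hpi : 0 < prior_pos P < 1) :
  let pp := prior_pos P in let pn := prior_neg P in
  [/\ phi_pos P = pn ^+ 2 / (pp ^+ 2 + pn ^+ 2 + pp * pn),
      rho_pos P = pp / (1 + pp),
      phi_neg P = pp ^+ 2 / (pp ^+ 2 + pn ^+ 2 + pp * pn)
    & rho_neg P = pn / (1 + pn)].
Proof.
move=> pp pn; have /andP [pp_gt0 pp_lt1] : 0 < pp < 1 := hpi.
rewrite /phi_pos /phi_neg /rho_pos /rho_neg !ev_true_labelE !ev_obs_labelE.
rewrite !out_cond_label_event /label_event_mass /label_pair_mass !big_bool /=.
rewrite /label_prob -/pp /pn /prior_neg -/pp.
have pn_gt0 : 0 < 1 - pp by rewrite subr_gt0.
by split; field; do ?[apply/andP; split]; apply: lt0r_neq0; nra.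
Qed.
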